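(* Consider the multistage ANC game described in the context, with linear plant $x^{t+1}=A_tx^t+b^tB_tu^t$, and assume: (i) for every $t=0,\dots,T-1$ there exist scalars $e_t,d_t$ and functions $\alpha_t,\beta_t:\mathbb{R}_+\to\mathbb{R}$ with $\lim_{y\to+\infty}\alpha_t(y)=\lim_{y\to+\infty}\beta_t(y)=+\infty$, $\alpha_t(y)\ge e_t$, $\beta_t(y)\ge d_t$, such that $\sigma^t(x,u)\ge\alpha_t(\|u\|)+\beta_t(\|x\|)$ for all $x\in\mathbb{R}^n$, $u\in\mathbb{R}^m$; (ii) for all $t=0,\dots,T-1$, $\sigma^t:\mathbb{R}^n\times\mathbb{R}^m\to\mathbb{R}_+$ is convex in both its arguments (jointly); (iii) $\sigma^T:\mathbb{R}^n\to\mathbb{R}_+$ is convex and there exist a scalar $d_T$ and a function $\beta_T:\mathbb{R}_+\to\mathbb{R}_+$ with $\lim_{y\to+\infty}\beta_T(y)=+\infty$, $\beta_T(y)\ge d_T$, such that $\sigma^T(x)\ge\beta_T(\|x\|)$; (iv) $\sigma^T$ is continuous; for every $t=0,\dots,T-1$, $\sigma^t(\cdot,u)$ is continuous uniformly in $u\in\mathbb{R}^m$, and $\sigma^t(x,\cdot)$ is continuous for every $x\in\mathbb{R}^n$. Define $V_T(x,s)=\sigma^T(x)-g^T(s)$ and, recursively for $t=T-1,\dots,0$, \[ V_t(x,s)=\inf_{u\in\mathbb{R}^m}\sup_{p\in\mathcal{S}_{N-1}}p'\mathcal{V}_t(x,s,u), \] where $\mathcal{V}_t(x,s,u)\in\mathbb{R}^N$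 has components \[ [\mathcal{V}_t(x,s,u)]_a=\sigma^t(x,u)-g^t(a,s)+\sum_{i\in\mathcal{F}}P^t_{si}(a)\big[q^t_iV_{t+1}(A_tx+B_tu,i)+(1-q^t_i)V_{t+1}(A_tx,i)\big]. \] Then for all $t=0,\dots,T-1$, $x\in\mathbb{R}^n$, $s\in\mathcal{F}$, the value functions $V_t$ are well defined, in the sense that \[ \inf_{u\in\mathbb{R}^m}\sup_{p\in\mathcal{S}_{N-1}}p'\mathcal{V}_t(x,s,u)=\sup_{p\in\mathcal{S}_{N-1}}\inf_{u\in\mathbb{R}^m}p'\mathcal{V}_t(x,s,u) \] and this common value is finite, and $V_t(\cdot,s)$ is convex and continuous in $x$. Furthermore, the strategy pair defined by $(u^* )^t=\arg\inf_{u\in\mathbb{R}^m}\sup_{p\in\mathcal{S}_{N-1}}p'\mathcal{V}_t(x,s,u)$ and $(p^* )^t=\arg\sup_{p\in\mathcal{S}_{N-1}}\inf_{u\in\mathbb{R}^m}p'\mathcal{V}_t(x,s,u)$ is a saddle-point strategy of the multistage ANC game.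
   Context: Multistage ANC game on horizon $\{0,\dots,T\}$. Regimes $\mathcal{F}=\{1,\dots,|\mathcal{F}|\}$, jammer actions $\mathcal{A}=\{1,\dots,N\}$, $\mathcal{S}_{N-1}$ the unit simplex in $\mathbb{R}^N$. For each $t$ and $a\in\mathcal{A}$, $P^t(a)$ is an $|\mathcal{F}|\times|\mathcal{F}|$ row-stochastic matrix, and $q^t=(q^t_1,\dots,q^t_{|\mathcal{F}|})'\in[0,1]^{|\mathcal{F}|}$. $A_t,B_t$ are real matrices of sizes $n\times n$, $n\times m$. The state is $(x^t,s^t)\in\mathbb{R}^n\times\mathcal{F}$, with given initial $(x^0,s^0)$. At each $t\le T-1$ the controller, observing $(x^t,s^t)$, chooses $u^t\in\mathbb{R}^m$; the jammer, observing $(x^t,s^t)$ and $u^t$, chooses a probability vector $p^t\in\mathcal{S}_{N-1}$ and $a^t$ is drawn according to $p^t$; then $s^{t+1}$ is drawn with $\mathrm{Pr}(s^{t+1}=i\mid s^t=j,a^t=a)=P^t_{ji}(a)$, $b^t\in\{0,1\}$ is drawn with $\mathrm{Pr}(b^t=1\mid s^{t+1}=i)=q^t_i$ (conditionally independent of everything else given $s^{t+1}$), and $x^{t+1}=A_tx^t+b^tB_tu^t$. Stage costs $\sigma^t:\mathbb{R}^n\times\mathbb{R}^m\to\mathbb{R}_+$, terminal cost $\sigma^T:\mathbb{R}^n\to\mathbb{R}_+$, jammer costs $g^t:\mathcal{A}\times\mathcal{F}\to\mathbb{R}$ ($t<T$) and $g^T:\mathcal{F}\to\mathbb{R}$. The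 total payoff is $\Sigma=\sum_{t=0}^{T-1}\sigma^t(x^t,u^t)+\sigma^T(x^T)-\sum_{t=0}^{T-1}g^t(a^t,s^t)$; the controller minimizes and the jammer maximizes its expectation $\mathbb{E}^{u,p}[\Sigma]$ over strategy sequences $\{u^t\}$, $\{p^t\}$. A saddle-point strategy is a pair $(\{(u^* )^t\},\{(p^* )^t\})$ with $\mathbb{E}^{u^*,p^*}[\Sigma]=\inf_{\{u^t\}}\sup_{\{p^t\}}\mathbb{E}^{u,p}[\Sigma]=\sup_{\{p^t\}}\inf_{\{u^t\}}\mathbb{E}^{u,p}[\Sigma]$. *)

From HB Require Import structures.
From mathcomp Require Import all_boot all_order all_algebra.
From mathcomp Require Import all_classical all_reals all_analysis.
Set Implicit Arguments. Unset Strict Implicit. Unset Printing Implicit Defensive.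
Import Order.TTheory GRing.Theory Num.Theory.
Import numFieldNormedType.Exports.
Local Open Scope ring_scope.
Local Open Scope classical_set_scope.

Section ANC.
Context {R : realType}.

Definition enorm (k : nat) (v : 'cV[R]_k) : R := Num.sqrt (\sum_i v i 0 ^+ 2).

Definition tends_to_infty (f : R -> R) : Prop :=
  forall M : R, exists y0 : R, forall y, y0 <= y -> M <= f y.

Definition simplex (N : nat) : set 'cV[R]_N :=
  [set p | (forall a, 0 <= p a 0) /\ \sum_a p a 0 = 1].
Arguments simplex : clear implicits.

Definition dotv (N : nat) (p v : 'cV[R]_N) : R := \sum_a p a 0 * v a 0.

Definition convex_fun (k : nat) (f : 'cV[R]_k -> R) : Prop :=
  forall (x y : 'cV[R]_k) (l : R), 0 <= l <= 1 ->
    f (l *: x + (1 - l) *: y) <= l * f x + (1 - l) * f y.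

Definition jointly_convex (n m : nat) (f : 'cV[R]_n -> 'cV[R]_m -> R) : Prop :=
  forall (x1 x2 : 'cV[R]_n) (u1 u2 : 'cV[R]_m) (l : R), 0 <= l <= 1 ->
    f (l *: x1 + (1 - l) *: x2) (l *: u1 + (1 - l) *: u2)
      <= l * f x1 u1 + (1 - l) * f x2 u2.

Definition unif_cont_in_x (n m : nat) (f : 'cV[R]_n -> 'cV[R]_m -> R) : Prop :=
  forall (x : 'cV[R]_n) (eps : R), 0 < eps -> exists delta : R, 0 < delta /\
    forall (x' : 'cV[R]_n) (u : 'cV[R]_m), enorm (x' - x) < delta ->
      `|f x' u - f x u| < eps.

Variables (n m nF N T : nat).
Variables (A : nat -> 'M[R]_n) (B : nat -> 'M[R]_(n, m)).
(* P t a j i = P^t_{ji}(a) *)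
Variable P : nat -> 'I_N -> 'I_nF -> 'I_nF -> R.
Variable q : nat -> 'I_nF -> R.
Variable sig : nat -> 'cV[R]_n -> 'cV[R]_m -> R.
Variable sigT : 'cV[R]_n -> R.
Variable g : nat -> 'I_N -> 'I_nF -> R.
Variable gT : 'I_nF -> R.

(* the vector \mathcal{V}_t(x,s,u) built from the next value function W = V_{t+1} *)
Definition Vvec (t : nat) (W : 'cV[R]_n -> 'I_nF -> R)
    (x : 'cV[R]_n) (s : 'I_nF) (u : 'cV[R]_m) : 'cV[R]_N :=
  \col_a (sig t x u - g t a s +
    \sum_i P t a s i * (q t i * W (A t *m x + B t *m u) i
                        + (1 - q t i) * W (A t *m x) i)).

Definition infsup (t : nat) (W : 'cV[R]_n -> 'I_nF -> R) (x : 'cV[R]_n) (s : 'I_nF)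
  : \bar R :=
  ereal_inf [set ereal_sup [set (dotv p (Vvec t W x s u))%:E | p in simplex N]
            | u in [set: 'cV[R]_m]].

Definition supinf (t : nat) (W : 'cV[R]_n -> 'I_nF -> R) (x : 'cV[R]_n) (s : 'I_nF)
  : \bar R :=
  ereal_sup [set ereal_inf [set (dotv p (Vvec t W x s u))%:E | u in [set: 'cV[R]_m]]
            | p in simplex N].

(* Vrev k = V_{T-k} *)
Fixpoint Vrev (k : nat) : 'cV[R]_n -> 'I_nF -> R :=
  match k with
  | 0 => fun x s => sigT x - gT s
  | k'.+1 => fun x s => fine (infsup (T - k'.+1) (Vrev k') x s)
  end.

Definition Vval (t : nat) : 'cV[R]_n -> 'I_nF -> R := Vrev (T - t).

(* controller strategies: u^t = us t x^t s^t ;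
   jammer strategies: p^t = ps t x^t s^t u^t *)
Definition ctrl_strat := nat -> 'cV[R]_n -> 'I_nF -> 'cV[R]_m.
Definition jam_strat := nat -> 'cV[R]_n -> 'I_nF -> 'cV[R]_m -> 'cV[R]_N.

Definition admissible_jam (ps : jam_strat) : Prop :=
  forall t x s u, (t < T)%N -> simplex N (ps t x s u).

(* a realization: for each t < T, (a^t, s^{t+1}, b^t) *)
Definition path := {ffun 'I_T -> 'I_N * 'I_nF * bool}.

Variables (x0 : 'cV[R]_n) (s0 : 'I_nF).

Definition sAt (w : path) (t : nat) : 'I_nF :=
  match t with
  | 0 => s0
  | t'.+1 => match (insub t' : option 'I_T) with
             | Some i => (w i).1.2
             | None => s0 end
  end.

Fixpoint xAt (us : ctrl_strat) (w : path) (t : nat) : 'cV[R]_n :=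
  match t with
  | 0 => x0
  | t'.+1 => let x := xAt us w t' in
             match (insub t' : option 'I_T) with
             | Some i => A t' *m x
                         + (nat_of_bool (w i).2)%:R *: (B t' *m us t' x (sAt w t'))
             | None => x end
  end.

Definition uAt (us : ctrl_strat) (w : path) (t : nat) : 'cV[R]_m :=
  us t (xAt us w t) (sAt w t).

Definition path_prob (us : ctrl_strat) (ps : jam_strat) (w : path) : R :=
  \prod_(i < T)
    (ps i (xAt us w i) (sAt w i) (uAt us w i) (w i).1.1 0
     * P i (w i).1.1 (sAt w i) (w i).1.2
     * (if (w i).2 then q i (w i).1.2 else 1 - q i (w i).1.2)).

Definition payoff (us : ctrl_strat) (w : path) : R :=
  \sum_(i < T) (sig i (xAt us w i) (uAt us w i) - g i (w i).1.1 (sAt w i))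
  + sigT (xAt us w T) - gT (sAt w T).

Definition expected_payoff (us : ctrl_strat) (ps : jam_strat) : R :=
  \sum_(w : path) path_prob us ps w * payoff us w.

Definition saddle_point (us : ctrl_strat) (ps : jam_strat) : Prop :=
  admissible_jam ps /\
  (expected_payoff us ps)%:E =
    ereal_inf [set ereal_sup [set (expected_payoff u p)%:E | p in admissible_jam]
              | u in [set: ctrl_strat]] /\
  (expected_payoff us ps)%:E =
    ereal_sup [set ereal_inf [set (expected_payoff u p)%:E | u in [set: ctrl_strat]]
              | p in admissible_jam].

End ANC.
Arguments simplex {R} N _.

From Pilot Require Import Defs.
From HB Require Import structures.
From mathcomp Require Import all_boot all_order all_algebra.
From mathcomp Require Import all_classical all_reals all_analysis.
Import Order.TTheory GRing.Theory Num.Theory.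
Import numFieldNormedType.Exports.
Local Open Scope ring_scope.
Local Open Scope classical_set_scope.

From mathcomp Require Import ring lra.

(* If the next value function is
   convex, continuous and bounded below, then for fixed (x, s) the N payoffs
   u |-> [V_t(x,s,u)]_a are convex, continuous and coercive, and a minimax
   theorem over the finite action set applies: inf_u max_a is attained and
   equals sup_p inf_u p'V.  It is proved by minimising the penalty
   sum_a max(V_a(u) - c, 0)^2 for c slightly below the value: the first-order
   condition at the minimiser yields an almost optimal mixture p, and the
   compactness of the simplex removes the error.  The new value function is
   convex by joint convexity of the stage cost, continuous since a convex
   function that is locally bounded above is continuous, and bounded below.
   Finally, the one-step optimality of u* and p* telescopes along the paths of
   the game into E^{u*,p}[Sigma] <= V_0(x0, s0) <= E^{u,p*}[Sigma]. *)

Set Implicit Arguments. Unset Strict Implicit. Unset Printing Implicit Defensive.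

Section MatrixNorm.
Variable R : realType.

Lemma mx_norm_entry_le a b (M : 'M[R]_(a, b)) i j : `|M i j| <= `|M|.
Proof.
rewrite [`|M|]mx_normrE.
exact: (le_bigmax _ (fun ij : 'I_a * 'I_b => `|M ij.1 ij.2|) (i, j)).
Qed.

Lemma mx_norm_le a b (M : 'M[R]_(a, b)) c : 0 <= c ->
  (forall i j, `|M i j| <= c) -> `|M| <= c.
Proof. by move=> c0 Mc; rewrite [`|M|]mx_normrE; apply: bigmax_le => // -[i j]. Qed.

Lemma enorm_ge0 k (v : 'cV[R]_k) : 0 <= enorm v.
Proof. exact: sqrtr_ge0. Qed.

Lemma mx_norm_le_enorm k (v : 'cV[R]_k) : `|v| <= enorm v.
Proof.
apply: mx_norm_le; first exact: enorm_ge0.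
move=> i j; rewrite ord1 -sqrtr_sqr /enorm ler_wsqrtr //.
by rewrite (bigD1 i) //= lerDl sumr_ge0 // => l _; exact: sqr_ge0.
Qed.

Lemma enorm_le_mx_norm k (v : 'cV[R]_k) : enorm v <= k%:R * `|v|.
Proof.
rewrite /enorm -[X in _ <= X]ger0_norm ?mulr_ge0 // -sqrtr_sqr ler_wsqrtr //.
apply: (@le_trans _ _ (\sum_(i < k) `|v| ^+ 2)).
  apply: ler_sum => i _; rewrite -real_normK ?num_real //.
  by rewrite lerXn2r ?nnegrE // mx_norm_entry_le.
rewrite sumr_const card_ord exprMn -[_ *+ k]mulr_natl ler_wpM2r ?sqr_ge0 //.
case: k {v} => [|k]; first by rewrite expr0n.
by rewrite expr2 ler_peMl // ler1n.
Qed.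

Lemma mx_norm_mulmx_le a b (M : 'M[R]_(a, b)) (v : 'cV[R]_b) :
  `|M *m v| <= (\sum_i \sum_j `|M i j|) * `|v|.
Proof.
apply: mx_norm_le => [|i j].
  by rewrite mulr_ge0 // sumr_ge0 // => i _; rewrite sumr_ge0.
rewrite ord1 mxE; apply: (le_trans (ler_norm_sum _ _ _)).
apply: (@le_trans _ _ ((\sum_j `|M i j|) * `|v|)).
  rewrite mulr_suml; apply: ler_sum => l _; rewrite normrM ler_wpM2l //.
  exact: mx_norm_entry_le.
rewrite ler_wpM2r // (bigD1 i) //= lerDl.
by rewrite sumr_ge0 // => l _; rewrite sumr_ge0.
Qed.

End MatrixNorm.

Section Continuity.
Variable R : realType.
Implicit Types V W : normedModType R.

Lemma continuous_atP V W (f : V -> W) x : {for x, continuous f} <->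
  forall e, 0 < e -> exists2 d, 0 < d & forall y, `|x - y| < d -> `|f x - f y| < e.
Proof.
split=> [/cvgrPdist_lt fx e /fx /nbhs_normP[d d0 fd]|fd].
  by exists d => // y /fd.
apply/cvgrPdist_lt => e /fd[d d0 dfe]; apply/nbhs_normP; exists d => // y /dfe.
Qed.

Lemma lipschitz_continuous V W (f : V -> W) (k : R) :
  (forall y z, `|f y - f z| <= k * `|y - z|) -> continuous f.
Proof.
move=> fk x; apply/continuous_atP => e e0.
have k1 : 0 < `|k| + 1 by rewrite ltr_wpDl.
exists (e / (`|k| + 1)) => [|y xy]; first by rewrite divr_gt0.
apply: (le_lt_trans (fk x y)); apply: (le_lt_trans (ler_wpM2r _ (ler_norm k))) => //.
apply: (@le_lt_trans _ _ (`|k| * (e / (`|k| + 1)))); first by rewrite ler_wpM2l // ltW.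
by rewrite mulrA ltr_pdivrMr // mulrDr mulr1 mulrC ltrDl.
Qed.

Lemma continuous_sumr V (I : finType) (f : I -> V -> R) :
  (forall i, continuous (f i)) -> continuous (fun x => \sum_i f i x).
Proof. by move=> fc; apply: continuous_big => [|i _]; [exact: add_continuous|exact: fc]. Qed.

Lemma continuous_addf V (f h : V -> R) : continuous f -> continuous h ->
  continuous (fun x => f x + h x).
Proof. by move=> fc hc x; apply: continuousD; [exact: fc | exact: hc]. Qed.

Lemma continuous_mulf V (f h : V -> R) : continuous f -> continuous h ->
  continuous (fun x => f x * h x).
Proof. by move=> fc hc x; apply: continuousM; [exact: fc | exact: hc]. Qed.

End Continuity.

Section Compactness.
Variable R : realType.

Lemma cV_box_compact k (r : R) :
  compact [set u : 'cV[R]_k | forall i, `|u i 0| <= r].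
Proof.
have -> : [set u : 'cV[R]_k | forall i, `|u i 0| <= r] =
    trmx @` [set v : 'rV[R]_k | forall i, `[- r, r]%classic (v ord0 i)].
  apply/seteqP; split => [u /= ur|_ [v /= vr <-] i].
    by exists u^T; [move=> i; rewrite /= mxE in_itv /= -ler_norml|rewrite trmxK].
  by have := vr i; rewrite /= in_itv /= -ler_norml mxE ord1.
apply: (@continuous_compact _ _ (@trmx R 1 k)).
  apply: continuous_subspaceT; apply: (@lipschitz_continuous _ _ _ _ 1) => M M'.
  rewrite mul1r; apply: mx_norm_le => // i j.
  by rewrite -linearB mxE; exact: mx_norm_entry_le.
by apply: (@rV_compact _ k (fun=> `[- r, r]%classic)) => i; exact: segment_compact.
Qed.

Lemma coercive_continuous_min k (f : 'cV[R]_k -> R) : continuous f ->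
  (forall M, exists r, forall u, r <= `|u| -> M <= f u) ->
  exists u0, forall u, f u0 <= f u.
Proof.
move=> fc fco; have [r fr] := fco (f 0 + 1).
set K := [set u : 'cV[R]_k | forall i, `|u i 0| <= `|r|].
have K0 : K 0 by move=> i; rewrite mxE normr0.
have [c Kc cmin] := compact_EVT_min (ex_intro _ 0 K0) (@cV_box_compact k `|r|)
  (continuous_subspaceT fc).
exists c => u; have [ru|ur] := leP r `|u|.
  by apply: le_trans (fr u ru); apply: le_trans (cmin 0 (mem_set K0)) _; rewrite lerDl.
apply/cmin/mem_set => i; apply: le_trans (mx_norm_entry_le _ _ _) _.
exact: le_trans (ltW ur) (ler_norm r).
Qed.

End Compactness.

Section Simplex.
Variable R : realType.

Lemma simplex_closed N : closed (simplex (R:=R) N).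
Proof.
have -> : simplex N = (\bigcap_(a in [set: 'I_N]) [set p : 'cV[R]_N | 0 <= p a 0])
    `&` [set p | \sum_a p a 0 = 1].
  by apply/seteqP; split => p [p0 p1]; split => // a; [move=> _|]; apply: p0.
have coord a : continuous (fun p : 'cV[R]_N => p a 0) by move=> p; exact: coord_continuous.
apply: closedI.
  apply: closed_bigI => a _.
  apply: (@preimage_closed _ _ (fun p : 'cV[R]_N => p a 0) [set x | 0 <= x]).
    by move=> p _; exact: coord.
  exact: closed_ge.
apply: (@preimage_closed _ _ (fun p : 'cV[R]_N => \sum_a p a 0) [set x | x = 1]).
  move=> p _.
  exact: (@continuous_sumr _ _ _ (fun a (p : 'cV[R]_N) => p a 0)).
exact: closed_eq.
Qed.

Lemma simplex_compact N : compact (simplex (R:=R) N).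
Proof.
apply: (subclosed_compact (@simplex_closed N) (@cV_box_compact R N 1)).
move=> p [p0 p1] a; rewrite ger0_norm // -p1 (bigD1 a) //= lerDl.
exact: sumr_ge0.
Qed.

Lemma bigmax_attained (I : finType) (F : I -> R) i0 :
  exists i, \big[Num.max/F i0]_i F i = F i.
Proof.
elim/big_ind: _ => [|x y [a ->] [b ->]|a _]; first by exists i0.
  by case: (leP (F a) (F b)) => _; [exists b | exists a].
by exists a.
Qed.

Lemma dotv_le_bigmax N (p v : 'cV[R]_N) a0 : simplex N p ->
  dotv p v <= \big[Num.max/v a0 0]_a v a 0.
Proof.
move=> [p0 p1]; apply: (@le_trans _ _ (\sum_a p a 0 * \big[Num.max/v a0 0]_a v a 0)).
  apply: ler_sum => a _; rewrite ler_wpM2l //.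
  exact: (le_bigmax _ (fun a => v a 0)).
by rewrite -mulr_suml p1 mul1r.
Qed.

Lemma ereal_sup_simplex_dotv N (v : 'cV[R]_N) a0 :
  ereal_sup [set (dotv p v)%:E | p in simplex N] =
  (\big[Num.max/v a0 0]_a v a 0)%:E.
Proof.
have [a' max_at] := bigmax_attained (fun a => v a 0) a0; rewrite max_at.
apply/le_anti/andP; split.
  apply: ge_ereal_sup => _ [p p_simplex <-]; rewrite lee_fin -max_at.
  exact: dotv_le_bigmax.
pose e := \col_a (a == a')%:R : 'cV[R]_N.
have dot_e : dotv e v = v a' 0.
  rewrite /dotv (bigD1 a') //= mxE eqxx mul1r big1 ?addr0 // => a /negbTE.
  by rewrite mxE => ->; rewrite mul0r.
apply: le_ereal_sup_tmp; exists (dotv e v)%:E; last by rewrite dot_e.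
exists e => //; split => [a|]; first by rewrite mxE ler0n.
under eq_bigr do rewrite mxE.
by rewrite (bigD1 a') //= eqxx big1 ?addr0 // => a /negbTE ->.
Qed.

End Simplex.

Section InfSup.
Variable R : realType.

Lemma ereal_inf_attained (T : Type) (f : T -> R) (D : set T) x0 : D x0 ->
  (forall x, D x -> f x0 <= f x) -> ereal_inf [set (f x)%:E | x in D] = (f x0)%:E.
Proof.
move=> Dx0 x0_min; apply/le_anti/andP; split; first by apply: ereal_inf_lbound; exists x0.
by apply: le_ereal_inf_tmp => _ [x Dx <-]; rewrite lee_fin x0_min.
Qed.

Lemma saddle_point_value (U Q : Type) (D : set Q) (J : U -> Q -> R) u0 p0 : D p0 ->
  (forall p, D p -> J u0 p <= J u0 p0) -> (forall u, J u0 p0 <= J u p0) ->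
  (J u0 p0)%:E = ereal_inf [set ereal_sup [set (J u p)%:E | p in D] | u in [set: U]] /\
  (J u0 p0)%:E = ereal_sup [set ereal_inf [set (J u p)%:E | u in [set: U]] | p in D].
Proof.
move=> Dp0 p0_best u0_best; split; apply/le_anti/andP; split.
- apply: le_ereal_inf_tmp => _ [u _ <-]; apply: le_ereal_sup_tmp.
  by exists (J u p0)%:E; [exists p0 | rewrite lee_fin u0_best].
- apply: ge_ereal_inf; exists (ereal_sup [set (J u0 p)%:E | p in D]); first by exists u0.
  by apply: ge_ereal_sup => _ [p Dp <-]; rewrite lee_fin p0_best.
- apply: le_ereal_sup_tmp; exists (ereal_inf [set (J u p0)%:E | u in [set: U]]).
    by exists p0.
  by apply: le_ereal_inf_tmp => _ [u _ <-]; rewrite lee_fin u0_best.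
- apply: ge_ereal_sup => _ [p Dp <-]; apply: ge_ereal_inf.
  by exists (J u0 p)%:E; [exists u0 | rewrite lee_fin p0_best].
Qed.

End InfSup.

Section SumNorm.
Variable R : realDomainType.

Lemma ler_sum_norm (I : finType) (F : I -> R) i : F i <= \sum_i `|F i|.
Proof. by apply: le_trans (ler_norm _) _; rewrite (bigD1 i) //= lerDl sumr_ge0. Qed.

Lemma ler_sum_norm2 (I J : finType) (F : I -> J -> R) i j :
  F i j <= \sum_i \sum_j `|F i j|.
Proof.
apply: le_trans (ler_sum_norm (F i) j) _.
rewrite (bigD1 i) //= lerDl sumr_ge0 // => i' _; exact: sumr_ge0.
Qed.

End SumNorm.

Lemma ge0_of_affine_ge0 (R : realFieldType) (S D : R) :
  (forall t, 0 < t -> t <= 1 -> 0 <= S + t * D) -> 0 <= S.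
Proof.
move=> SD; rewrite leNgt; apply/negP => S0.
have D1 : 0 < `|D| + 1 by rewrite ltr_wpDl.
pose t := Num.min 1 (- S / (`|D| + 1)).
have t0 : 0 < t by rewrite lt_min ltr01 /= divr_gt0 // oppr_gt0.
have tD : t * D <= t * `|D| by rewrite ler_wpM2l ?(ltW t0) ?ler_norm.
have tD1 : t * (`|D| + 1) <= - S by rewrite -ler_pdivlMr // ge_min lexx orbT.
have t1 : t <= 1 by rewrite ge_min lexx.
have := SD t t0 t1; nra.
Qed.

Lemma sqr_max0_le (R : realDomainType) (z y : R) : z <= y -> Num.max z 0 ^+ 2 <= y ^+ 2.
Proof.
case: (leP z 0) => z0 zy; first by rewrite expr0n sqr_ge0.
by rewrite lerXn2r ?nnegrE ?(ltW z0) // (le_trans (ltW z0) zy).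
Qed.

Lemma bigmin_le_seq (R : realDomainType) (I : eqType) (s : seq I) (F : I -> R) x j :
  j \in s -> \big[Num.min/x]_(i <- s) F i <= F j.
Proof.
elim: s => [//|i s IH]; rewrite inE big_cons => /orP[/eqP<-|/IH Fj].
  by rewrite ge_min lexx.
by rewrite ge_min Fj orbT.
Qed.

Section Minimax.
Variables (R : realType) (N m : nat) (V : 'I_N -> 'cV[R]_m -> R) (a0 : 'I_N).
Hypothesis V_convex : forall a, convex_fun (V a).
Hypothesis V_continuous : forall a, continuous (V a).
Hypothesis V_coercive : forall M, exists r, forall u, r <= `|u| -> forall a, M <= V a u.

Definition vmax u := \big[Num.max/V a0 u]_a V a u.

Lemma le_vmax a u : V a u <= vmax u.
Proof. exact: le_bigmax. Qed.

Lemma vmax_attained u : exists a, vmax u = V a u.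
Proof. exact: bigmax_attained. Qed.

Lemma continuous_vmax : continuous vmax.
Proof.
move=> x; apply/continuous_atP => e e0.
have Vx a : \forall y \near x, `|V a x - V a y| < e.
  by move: (@V_continuous a x) => /cvgrPdist_lt /(_ e e0).
have /nbhs_normP[d d0 close] : \forall y \near x, forall a, `|V a x - V a y| < e.
  exact: (@filter_forall _ _ (fun a y => `|V a x - V a y| < e) _ _ Vx).
exists d => // y /close {}close.
have [ax vx] := vmax_attained x; have [ay vy] := vmax_attained y.
have := le_vmax ay x; have := le_vmax ax y; rewrite vx vy.
move: (close ax) (close ay); rewrite !ltr_norml => /andP[? ?] /andP[? ?] ? ?.
by apply/andP; split; lra.
Qed.

Lemma vmax_has_min : exists u0, forall u, vmax u0 <= vmax u.
Proof.
apply: coercive_continuous_min continuous_vmax _ => M.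
have [r Vr] := V_coercive M; exists r => u /Vr /(_ a0) MV.
exact: le_trans MV (le_vmax a0 u).
Qed.

Section Penalty.
Variable c : R.

Definition excess u a := Num.max (V a u - c) 0.

Definition penalty u := \sum_a excess u a ^+ 2.

Lemma excess_ge0 u a : 0 <= excess u a.
Proof. by rewrite le_max lexx orbT. Qed.

Lemma le_excess u a : V a u - c <= excess u a.
Proof. by rewrite le_max lexx. Qed.

Lemma continuous_penalty : continuous penalty.
Proof.
apply: continuous_sumr => a u.
apply: (@continuous_comp _ _ _ (excess^~ a) (fun z => z ^+ 2)); last first.
  exact: exprn_continuous.
apply: (@continuous_max _ _ (fun u => V a u - c) (fun=> 0)); last exact: cst_continuous.
by apply: continuousB; [exact: V_continuous | exact: cst_continuous].
Qed.

Lemma penalty_coercive M : exists r, forall u, r <= `|u| -> M <= penalty u.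
Proof.
have [r Vr] := V_coercive (c + Num.max M 1); exists r => u /Vr /(_ a0) cV.
have M1 : 1 <= Num.max M 1 by rewrite le_max lexx orbT.
have MM : M <= Num.max M 1 by rewrite le_max lexx.
rewrite /penalty (bigD1 a0) //=; apply: (@le_trans _ _ (excess u a0 ^+ 2)).
  rewrite /excess max_l; [nra | lra].
by rewrite lerDl sumr_ge0 // => a _; exact: sqr_ge0.
Qed.

(* Along the segment from [u1] towards [u], convexity of the [V a] bounds the
   penalty by [penalty u1 + t (2 S + t D)], so minimality forces [S >= 0]. *)
Lemma penalty_min_first_order u1 : (forall u, penalty u1 <= penalty u) ->
  forall u, \sum_a excess u1 a ^+ 2 <= \sum_a excess u1 a * (V a u - c).
Proof.
move=> u1_min u; pose d a := V a u - c - excess u1 a.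
set S := \sum_a excess u1 a * d a; set D := \sum_a d a ^+ 2.
have S0 : 0 <= 2 * S.
  apply: ge0_of_affine_ge0 (D) _ => t t0 t1.
  have t01 : 0 <= t <= 1 by rewrite (ltW t0).
  have : penalty u1 <= \sum_a (excess u1 a + t * d a) ^+ 2.
    apply: le_trans (u1_min (t *: u + (1 - t) *: u1)) _.
    apply: ler_sum => a _; apply: sqr_max0_le.
    have := V_convex a u u1 t01; have := le_excess u1 a; rewrite /d; nra.
  have -> : \sum_a (excess u1 a + t * d a) ^+ 2 = penalty u1 + t * (2 * S + t * D).
    rewrite /penalty /S /D !mulr_sumr -!big_split /= mulr_sumr.
    by rewrite -big_split; apply: eq_bigr => a _ /=; ring.
  by rewrite lerDl pmulr_rge0.
have -> : \sum_a excess u1 a * (V a u - c) = \sum_a excess u1 a ^+ 2 + S.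
  by rewrite /S -big_split; apply: eq_bigr => a _; rewrite /d /=; ring.
lra.
Qed.

End Penalty.

(* Minimising the penalty at level [c = vmax u0 - e] and normalising the
   resulting excesses gives the mixture. *)
Lemma near_optimal_mixture u0 : (forall u, vmax u0 <= vmax u) ->
  forall e, 0 < e -> exists2 p : 'cV[R]_N, simplex N p &
    forall u, vmax u0 - e <= \sum_a p a 0 * V a u.
Proof.
move=> u0_min e e0; set c := vmax u0 - e.
have [u1 u1_min] := coercive_continuous_min (@continuous_penalty c) (@penalty_coercive c).
set Z := \sum_a excess c u1 a.
have Z0 : 0 < Z.
  have [a' Va'] := vmax_attained u1.
  apply: (@lt_le_trans _ _ (excess c u1 a')).
    by rewrite /excess lt_max; have := u0_min u1; rewrite Va' /c; lra.
  by rewrite /Z (bigD1 a') //= lerDl sumr_ge0 // => a _; exact: excess_ge0.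
exists (\col_a (excess c u1 a / Z)).
  split => [a|]; first by rewrite mxE divr_ge0 ?excess_ge0 ?ltW.
  by under eq_bigr do rewrite mxE; rewrite -mulr_suml divff // gt_eqF.
move=> u; under eq_bigr do rewrite mxE.
have := penalty_min_first_order u1_min u.
have sq0 : 0 <= \sum_a excess c u1 a ^+ 2 by apply: sumr_ge0 => a _; exact: sqr_ge0.
have -> : \sum_a excess c u1 a * (V a u - c) = \sum_a excess c u1 a * V a u - c * Z.
  by rewrite /Z mulr_sumr -sumrB; apply: eq_bigr => a _; ring.
have -> : \sum_a excess c u1 a / Z * V a u = (\sum_a excess c u1 a * V a u) / Z.
  by rewrite mulr_suml; apply: eq_bigr => a _; rewrite mulrAC.
rewrite ler_pdivlMr // -/c; lra.
Qed.

(* The mixtures that are [e]-optimal against [u] form closed subsets of the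
   compact simplex with the finite intersection property. *)
Theorem minimax : exists u0, exists2 p : 'cV[R]_N, simplex N p &
  (forall u, vmax u0 <= vmax u) /\ (forall u, vmax u0 <= \sum_a p a 0 * V a u).
Proof.
have [u0 u0_min] := vmax_has_min.
have := @simplex_compact R N; rewrite compact_In0 /=.
move=> /(_ ('cV[R]_m * R)%type [set i | 0 < i.2]
   (fun i => simplex N `&` [set p | vmax u0 - i.2 <= \sum_a p a 0 * V a i.1])).
case.
- exists (fun i => [set p : 'cV[R]_N | vmax u0 - i.2 <= \sum_a p a 0 * V a i.1]) => // i _.
  apply: (@preimage_closed _ _ (fun p : 'cV[R]_N => \sum_a p a 0 * V a i.1)
     [set x | vmax u0 - i.2 <= x]); last exact: closed_ge.
  move=> p _; apply: (@continuous_sumr _ _ _ (fun a (p : 'cV[R]_N) => p a 0 * V a i.1)).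
  by move=> a q; apply: continuousM; [exact: coord_continuous | exact: cst_continuous].
- move=> D D_pos; pose emin := \big[Num.min/1]_(i <- finmap.enum_fset D) i.2.
  have emin0 : 0 < emin.
    rewrite /emin big_seq; elim/big_ind: _ => //.
      by move=> x y x0 y0; rewrite lt_min x0 y0.
    by move=> i /D_pos; rewrite in_setE.
  have [p p_simplex p_opt] := near_optimal_mixture u0_min emin0.
  exists p => i /= iD; split => //; apply: le_trans (p_opt i.1); rewrite lerB //.
  exact: (bigmin_le_seq (fun i : 'cV[R]_m * R => i.2) 1 iD).
- move=> p p_opt; exists u0, p; first by have [] := p_opt (0, 1) ltr01.
  split => // u; apply/ler_addgt0Pr => e e0.
  by have [_ /=] := p_opt (u, e) e0; lra.
Qed.

End Minimax.

Section ConvexContinuity.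
Variables (R : realType) (k : nat) (f : 'cV[R]_k -> R).
Hypothesis f_convex : convex_fun f.
Variables (x : 'cV[R]_k) (d : R).
Hypothesis f_bounded : forall z, `|x - z| < d -> f z < f x + 1.
Variables (t : R) (y : 'cV[R]_k).
Hypotheses (t0 : 0 < t) (t1 : t < 1) (xy : `|y - x| < t * d).

Let far_point_close (sign : R) : `|sign| = 1 -> `|x - (x + sign * t^-1 *: (y - x))| < d.
Proof.
move=> sign1; rewrite opprD addrA subrr sub0r normrN normrZ normrM sign1 mul1r.
by rewrite ger0_norm ?invr_ge0 ?ltW // -ltr_pdivlMl ?invr_gt0 // invrK.
Qed.

(* [y] is the convex combination [t (x + (y - x) / t) + (1 - t) x]. *)
Lemma convex_upper_near : f y < f x + t.
Proof.
pose z := x + 1 * t^-1 *: (y - x).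
have yE : y = t *: z + (1 - t) *: x.
  by apply/matrixP => i j; rewrite !mxE; field; exact: lt0r_neq0.
have t01 : 0 <= t <= 1 by rewrite (ltW t0) (ltW t1).
have := f_convex z x t01; rewrite -yE.
have : t * f z < t * (f x + 1) by rewrite ltr_pM2l // f_bounded // far_point_close ?normr1.
lra.
Qed.

(* [x] is the convex combination [y / (1 + t) + t / (1 + t) (x - (y - x) / t)]. *)
Lemma convex_lower_near : f x < f y + t.
Proof.
pose z := x + -1 * t^-1 *: (y - x); pose l := (1 + t)^-1.
have t10 : 0 < 1 + t by rewrite addr_gt0.
have xE : x = l *: y + (1 - l) *: z.
  by apply/matrixP => i j; rewrite !mxE /l; field; rewrite !lt0r_neq0.
have l0 : 0 < l by rewrite invr_gt0.
have l1 : l < 1 by rewrite invf_lt1 // ltrDl.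
have l01 : 0 <= l <= 1 by rewrite (ltW l0) (ltW l1).
have := f_convex y z l01; rewrite -xE => fx_le.
have : (1 - l) * f z < (1 - l) * (f x + 1).
  by rewrite ltr_pM2l ?subr_gt0 // f_bounded // far_point_close ?normrN1.
move=> fz_lt; have : (1 + t) * f x < (1 + t) * (l * f y + (1 - l) * (f x + 1)).
  by rewrite ltr_pM2l //; lra.
have -> : (1 + t) * (l * f y + (1 - l) * (f x + 1)) = f y + t * (f x + 1).
  by rewrite /l; field; exact: lt0r_neq0.
lra.
Qed.

End ConvexContinuity.

Lemma convex_continuous (R : realType) k (f : 'cV[R]_k -> R) : convex_fun f ->
  (forall x, exists2 d, 0 < d & forall z, `|x - z| < d -> f z < f x + 1) ->
  continuous f.
Proof.
move=> f_convex f_bounded x; apply/continuous_atP => e e0.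
have [d d0 bounded_d] := f_bounded x.
pose t := Num.min e 1 / 2.
have t0 : 0 < t by rewrite divr_gt0 // lt_min e0 ltr01.
have [te t1] : t < e /\ t < 1.
  have : Num.min e 1 <= e by rewrite ge_min lexx.
  have : Num.min e 1 <= 1 by rewrite ge_min lexx orbT.
  by rewrite /t; lra.
exists (t * d) => [|y xy]; first by rewrite mulr_gt0.
rewrite distrC in xy.
have := convex_upper_near f_convex bounded_d t0 t1 xy.
have := convex_lower_near f_convex bounded_d t0 xy.
by rewrite ltr_norml; lra.
Qed.

Section BellmanStep.
Variables (R : realType) (n m nF N : nat) (A : nat -> 'M[R]_n)
  (B : nat -> 'M[R]_(n, m)) (P : nat -> 'I_N -> 'I_nF -> 'I_nF -> R)
  (q : nat -> 'I_nF -> R) (sig : nat -> 'cV[R]_n -> 'cV[R]_m -> R)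
  (g : nat -> 'I_N -> 'I_nF -> R).
Hypothesis N_gt0 : (0 < N)%N.
Hypothesis P_ge0 : forall t a j i, 0 <= P t a j i.
Hypothesis P_sum1 : forall t a j, \sum_i P t a j i = 1.
Hypothesis q_01 : forall t i, 0 <= q t i <= 1.
Variable t : nat.
Variables (e0 d0 : R) (al be : R -> R).
Hypothesis al_infty : tends_to_infty al.
Hypothesis al_ge : forall y, 0 <= y -> e0 <= al y.
Hypothesis be_ge : forall y, 0 <= y -> d0 <= be y.
Hypothesis sig_ge : forall x u, al (enorm u) + be (enorm x) <= sig t x u.
Hypothesis sig_convex : jointly_convex (sig t).
Hypothesis sig_unif_cont_x : unif_cont_in_x (sig t).
Hypothesis sig_cont_u : forall x, continuous (sig t x).
Variable W : 'cV[R]_n -> 'I_nF -> R.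
Hypothesis W_convex : forall i, convex_fun (W^~ i).
Hypothesis W_continuous : forall i, continuous (W^~ i).
Variable L : R.
Hypothesis W_ge : forall x i, L <= W x i.

Lemma affine_convex_comb k (M1 : 'M[R]_(n, k)) (M2 : 'M[R]_(n, m))
  (x1 x2 : 'cV[R]_k) (u1 u2 : 'cV[R]_m) (l : R) :
  M1 *m (l *: x1 + (1 - l) *: x2) + M2 *m (l *: u1 + (1 - l) *: u2) =
  l *: (M1 *m x1 + M2 *m u1) + (1 - l) *: (M1 *m x2 + M2 *m u2).
Proof. by rewrite !mulmxDr -!scalemxAr !scalerDr addrACA. Qed.

Definition action0 : 'I_N := Ordinal N_gt0.

Definition stage_cost x s a u := Vvec A B P q sig g t W x s u a 0.

Lemma stage_costE x s a u : stage_cost x s a u = sig t x u - g t a s +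
  \sum_i P t a s i * (q t i * W (A t *m x + B t *m u) i
                      + (1 - q t i) * W (A t *m x) i).
Proof. by rewrite /stage_cost mxE. Qed.

Lemma stage_cost_jointly_convex s a x1 x2 u1 u2 l : 0 <= l <= 1 ->
  stage_cost (l *: x1 + (1 - l) *: x2) s a (l *: u1 + (1 - l) *: u2)
  <= l * stage_cost x1 s a u1 + (1 - l) * stage_cost x2 s a u2.
Proof.
move=> l01; rewrite !stage_costE.
have := sig_convex x1 x2 u1 u2 l01; have [l0 l1] := andP l01.
set S1 := \sum_i _; set S2 := \sum_i _; set S3 := \sum_i _.
suff : S1 <= l * S2 + (1 - l) * S3 by lra.
rewrite /S1 /S2 /S3 !mulr_sumr -big_split /=; apply: ler_sum => i _.
have moved := @W_convex i (A t *m x1 + B t *m u1) (A t *m x2 + B t *m u2) l l01.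
have idle := @W_convex i (A t *m x1) (A t *m x2) l l01.
rewrite -affine_convex_comb in moved; rewrite !scalemxAr -mulmxDr in idle.
have [q0 q1] := andP (q_01 t i); rewrite -subr_ge0 in q1.
have := ler_wpM2l (P_ge0 t a s i) (lerD (ler_wpM2l q0 moved) (ler_wpM2l q1 idle)).
by move/le_trans; apply; rewrite le_eqVlt; apply/orP; left; apply/eqP; ring.
Qed.

Lemma continuous_W_affine k (M : 'M[R]_(n, k)) (c : 'cV[R]_n) i :
  continuous (fun v => W (M *m v + c) i).
Proof.
move=> v; apply: (@continuous_comp _ _ _ (fun v => M *m v + c) (W^~ i)); last first.
  exact: W_continuous.
apply: (@lipschitz_continuous _ _ _ _ (\sum_i \sum_j `|M i j|)) => y z.
by rewrite opprD addrACA subrr addr0 -mulmxBr mx_norm_mulmx_le.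
Qed.

Lemma continuous_stage_cost_u x s a : continuous (stage_cost x s a).
Proof.
rewrite (_ : stage_cost x s a = fun u => sig t x u + - g t a s +
    \sum_i P t a s i * (q t i * W (B t *m u + A t *m x) i
                        + (1 - q t i) * W (A t *m x) i)); last first.
  apply: funext => u; rewrite stage_costE; congr (_ + _).
  by apply: eq_bigr => i _; rewrite [A t *m x + _]addrC.
have cst (c : R) : continuous (fun _ : 'cV[R]_m => c) by move=> ?; exact: cst_continuous.
apply: continuous_addf; first exact: continuous_addf.
apply: continuous_sumr => i; apply: continuous_mulf => //.
by apply: continuous_addf => //; apply: continuous_mulf => //; exact: continuous_W_affine.
Qed.

Lemma continuous_sig_x u : continuous (sig t ^~ u).
Proof.
move=> x; apply/continuous_atP => e e_gt0.
have [d [d_gt0 sig_close]] := sig_unif_cont_x x e_gt0.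
have n1 : 0 < n%:R + 1 :> R by rewrite ltr_wpDl.
exists (d / (n%:R + 1)) => [|y xy]; first by rewrite divr_gt0.
rewrite distrC; apply: sig_close; apply: le_lt_trans (enorm_le_mx_norm _) _.
rewrite distrC; apply: (@le_lt_trans _ _ (n%:R * (d / (n%:R + 1)))).
  by rewrite ler_wpM2l // ltW.
by rewrite mulrA ltr_pdivrMr // mulrC ltr_pM2l //; lra.
Qed.

Lemma continuous_stage_cost_x s a u : continuous (fun x => stage_cost x s a u).
Proof.
rewrite (_ : (fun x => stage_cost x s a u) = fun x => sig t x u + - g t a s +
    \sum_i P t a s i * (q t i * W (A t *m x + B t *m u) i
                        + (1 - q t i) * W (A t *m x + 0) i)); last first.
  by apply: funext => x; rewrite stage_costE; under [in RHS]eq_bigr do rewrite addr0.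
have cst (c : R) : continuous (fun _ : 'cV[R]_n => c) by move=> ?; exact: cst_continuous.
apply: continuous_addf; first by apply: continuous_addf => //; exact: continuous_sig_x.
apply: continuous_sumr => i; apply: continuous_mulf => //.
by apply: continuous_addf; apply: continuous_mulf => //; exact: continuous_W_affine.
Qed.

Lemma stage_cost_lb x s a u :
  al (enorm u) + be (enorm x) - g t a s + L <= stage_cost x s a u.
Proof.
rewrite stage_costE; have := sig_ge x u.
suff : L <= \sum_i P t a s i * (q t i * W (A t *m x + B t *m u) i
                      + (1 - q t i) * W (A t *m x) i) by lra.
rewrite -[L]mul1r -{1}(P_sum1 t a s) mulr_suml; apply: ler_sum => i _.
rewrite ler_wpM2l //; have [q0 q1] := andP (q_01 t i).
have := W_ge (A t *m x + B t *m u) i; have := W_ge (A t *m x) i; nra.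
Qed.

Lemma stage_cost_coercive x s M :
  exists r, forall u, r <= `|u| -> forall a, M <= stage_cost x s a u.
Proof.
set G := \sum_a \sum_j `|g t a j|.
have [y0 al_large] := al_infty (M - be (enorm x) + G - L).
exists y0 => u u_large a.
have := al_large _ (le_trans u_large (mx_norm_le_enorm u)).
have g_le : g t a s <= G := ler_sum_norm2 (g t) a s.
have := stage_cost_lb x s a u; lra.
Qed.

Lemma convex_stage_cost_u x s a : convex_fun (stage_cost x s a).
Proof.
move=> u1 u2 l l01; have := stage_cost_jointly_convex s a x x u1 u2 l01.
by rewrite -scalerDl addrC subrK scale1r.
Qed.

Let stage_vmax x s := vmax (stage_cost x s) action0.

Lemma stage_minimax x s : exists u0, exists2 p : 'cV[R]_N, simplex N p &
  [/\ infsup A B P q sig g t W x s = (stage_vmax x s u0)%:E,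
      supinf A B P q sig g t W x s = (stage_vmax x s u0)%:E,
      forall u, stage_vmax x s u0 <= stage_vmax x s u &
      forall u, stage_vmax x s u0 <= dotv p (Vvec A B P q sig g t W x s u)].
Proof.
have [u0 [p p_simplex [u0_min p_opt]]] := minimax action0 (@convex_stage_cost_u x s)
  (@continuous_stage_cost_u x s) (@stage_cost_coercive x s).
exists u0, p => //; split => //.
- have sup_vmax u : ereal_sup [set (dotv p' (Vvec A B P q sig g t W x s u))%:E
      | p' in simplex N] = (stage_vmax x s u)%:E by exact: ereal_sup_simplex_dotv.
  rewrite /infsup; under eq_imagel do rewrite sup_vmax.
  by apply: ereal_inf_attained => // u _; exact: u0_min.
- apply/le_anti/andP; split.
    apply: ge_ereal_sup => _ [p' p'_simplex <-].
    apply: ge_ereal_inf; exists (dotv p' (Vvec A B P q sig g t W x s u0))%:E.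
      by exists u0.
    by rewrite lee_fin; exact: dotv_le_bigmax.
  apply: le_ereal_sup_tmp.
  exists (ereal_inf [set (dotv p (Vvec A B P q sig g t W x s u))%:E | u in [set: 'cV_m]]).
    by exists p.
  by apply: le_ereal_inf_tmp => _ [u _ <-]; rewrite lee_fin; exact: p_opt.
Qed.

Definition next_value x s := fine (infsup A B P q sig g t W x s).

Lemma stage_saddle x s :
  [/\ infsup A B P q sig g t W x s = supinf A B P q sig g t W x s,
      infsup A B P q sig g t W x s = (next_value x s)%:E,
      exists u0, ereal_sup [set (dotv p (Vvec A B P q sig g t W x s u0))%:E
                           | p in simplex N] = infsup A B P q sig g t W x s &
      exists2 p, simplex N p &
        ereal_inf [set (dotv p (Vvec A B P q sig g t W x s u))%:E | u in [set: 'cV_m]]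
        = supinf A B P q sig g t W x s].
Proof.
rewrite /next_value; have [u0 [p p_simplex [-> -> u0_min p_opt]]] := stage_minimax x s.
split => //; first by exists u0; exact: (ereal_sup_simplex_dotv _ action0).
have u0_best : dotv p (Vvec A B P q sig g t W x s u0) <= stage_vmax x s u0.
  exact: dotv_le_bigmax.
exists p => //; rewrite (ereal_inf_attained (x0:=u0)) // => [|u _].
  by congr (_%:E); apply/le_anti; rewrite u0_best p_opt.
exact: le_trans u0_best (p_opt u).
Qed.

Lemma next_value_minimal x s : exists u0, next_value x s = stage_vmax x s u0 /\
  forall u, next_value x s <= stage_vmax x s u.
Proof.
have [u0 [p _ [infsupE _ u0_min _]]] := stage_minimax x s.
by exists u0; rewrite /next_value infsupE.
Qed.

Lemma next_value_lb x s : e0 + d0 - \sum_a \sum_j `|g t a j| + L <= next_value x s.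
Proof.
have [u0 [-> _]] := next_value_minimal x s.
apply: le_trans (@le_vmax _ _ _ (stage_cost x s) action0 action0 u0).
have := stage_cost_lb x s action0 u0; have := ler_sum_norm2 (g t) action0 s.
have := al_ge (enorm_ge0 u0); have := be_ge (enorm_ge0 x); lra.
Qed.

Lemma convex_next_value s : convex_fun (next_value^~ s).
Proof.
move=> x1 x2 l l01; have [l0 l1] := andP l01.
have [u1 [-> _]] := next_value_minimal x1 s; have [u2 [-> _]] := next_value_minimal x2 s.
have [_ [_ /(_ (l *: u1 + (1 - l) *: u2)) le_mix]] :=
  next_value_minimal (l *: x1 + (1 - l) *: x2) s.
apply: le_trans le_mix _; rewrite /stage_vmax.
have [a ->] := vmax_attained (stage_cost (l *: x1 + (1 - l) *: x2) s) action0
  (l *: u1 + (1 - l) *: u2).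
apply: le_trans (stage_cost_jointly_convex s a x1 x2 u1 u2 l01) _.
by apply: lerD; apply: ler_wpM2l; rewrite ?subr_ge0 //; exact: le_vmax.
Qed.

Lemma continuous_next_value s : continuous (next_value^~ s).
Proof.
apply: convex_continuous (convex_next_value s) _ => x.
have [u0 [Vx _]] := next_value_minimal x s.
have /continuous_atP/(_ 1 ltr01)[d d_gt0 close] :=
  @continuous_vmax _ _ _ _ action0 (fun a => @continuous_stage_cost_x s a u0) x.
set h := vmax _ _ in close.
have hx : h x = next_value x s by rewrite Vx.
exists d => // z /close; rewrite ltr_norml => /andP[near _].
have [_ [_ /(_ u0) hz]] := next_value_minimal z s.
have : next_value z s <= h z := hz.
lra.
Qed.

End BellmanStep.

Section Reindex.
Variable R : realType.

Definition fupd (I X : finType) (w : {ffun I -> X}) (i0 : I) (y : X) :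
  {ffun I -> X} := [ffun j => if j == i0 then y else w j].

Lemma sumr_ffun_update (I X : finType) (F : {ffun I -> X} -> R) (i0 : I) (y0 : X) :
  \sum_w F w = \sum_(w : {ffun I -> X}) (w i0 == y0)%:R * \sum_y F (fupd w i0 y).
Proof.
under [RHS]eq_bigr do rewrite mulr_sumr.
rewrite exchange_big (partition_big (fun w : {ffun I -> X} => w i0) predT) //=.
apply: eq_bigr => y _.
rewrite [RHS](eq_bigr (fun w : {ffun I -> X} => if w i0 == y0 then F (fupd w i0 y) else 0));
  last by move=> w _; case: eqP => _; rewrite ?mul1r ?mul0r.
rewrite -big_mkcond (reindex_onto (fun w => fupd w i0 y) (fun w => fupd w i0 y0)) /=;
  last by move=> w /eqP wy; apply/ffunP => j; rewrite !ffunE; case: eqP => [->|].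
apply: eq_bigl => w; rewrite /fupd ffunE eqxx eqxx andTb.
apply/eqP/eqP => [/(congr1 (fun f : {ffun I -> X} => f i0))|wy]; first by rewrite !ffunE eqxx.
by apply/ffunP => j; rewrite !ffunE; case: eqP => [->|].
Qed.

Lemma prodr_ltnS T (f : 'I_T -> R) k (hk : (k < T)%N) :
  \prod_(i < T | (i < k.+1)%N) f i = (\prod_(i < T | (i < k)%N) f i) * f (Ordinal hk).
Proof.
rewrite (bigD1 (Ordinal hk)) //= mulrC; congr (_ * _); apply: eq_bigl => i.
by rewrite -val_eqE /= ltnS; case: ltngtP.
Qed.

Lemma sumr_ltnS T (f : 'I_T -> R) k (hk : (k < T)%N) :
  \sum_(i < T | (i < k.+1)%N) f i = (\sum_(i < T | (i < k)%N) f i) + f (Ordinal hk).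
Proof.
rewrite (bigD1 (Ordinal hk)) //= addrC; congr (_ + _); apply: eq_bigl => i.
by rewrite -val_eqE /= ltnS; case: ltngtP.
Qed.

Lemma prodr_geqS T (f : 'I_T -> R) k (hk : (k < T)%N) :
  \prod_(i < T | ~~ (i < k)%N) f i =
  f (Ordinal hk) * \prod_(i < T | ~~ (i < k.+1)%N) f i.
Proof.
rewrite (bigD1 (Ordinal hk)) /= ?ltnn //; congr (_ * _); apply: eq_bigl => i.
by rewrite -val_eqE /= ltnS -!leqNgt; case: ltngtP.
Qed.

End Reindex.

Section Game.
Variables (R : realType) (n m nF N T : nat) (A : nat -> 'M[R]_n)
  (B : nat -> 'M[R]_(n, m)) (P : nat -> 'I_N -> 'I_nF -> 'I_nF -> R)
  (q : nat -> 'I_nF -> R) (sig : nat -> 'cV[R]_n -> 'cV[R]_m -> R)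
  (sigT : 'cV[R]_n -> R) (g : nat -> 'I_N -> 'I_nF -> R) (gT : 'I_nF -> R)
  (x0 : 'cV[R]_n) (s0 : 'I_nF).
Variable a0 : 'I_N.
Hypothesis P_ge0 : forall t a j i, 0 <= P t a j i.
Hypothesis P_sum1 : forall t a j, \sum_i P t a j i = 1.
Hypothesis q_01 : forall t i, 0 <= q t i <= 1.
Variables (us : @ctrl_strat R n m nF) (ps : @jam_strat R n m nF N).
Hypothesis ps_admissible : admissible_jam T ps.
Variable V : nat -> 'cV[R]_n -> 'I_nF -> R.
Hypothesis V_terminal : forall x s, V T x s = sigT x - gT s.

(* [cut_value k] is the expected payoff of the game stopped at time [k] with
   terminal cost [V k]; the steps after [k] are frozen to [idle_step], so that
   all the [cut_value k] are sums over the same space of paths. *)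
Definition idle_step : 'I_N * 'I_nF * bool := (a0, s0, false).
Definition state (w : Defs.path nF N T) k := xAt A B x0 s0 us w k.
Definition regime (w : Defs.path nF N T) k := sAt s0 w k.
Local Notation ctrl w k := (us k (state w k) (regime w k)).
Definition step_prob (w : Defs.path nF N T) (i : 'I_T) :=
  ps i (state w i) (regime w i) (ctrl w i) (w i).1.1 0
  * P i (w i).1.1 (regime w i) (w i).1.2
  * (if (w i).2 then q i (w i).1.2 else 1 - q i (w i).1.2).
Definition step_cost (w : Defs.path nF N T) (i : 'I_T) :=
  sig i (state w i) (ctrl w i) - g i (w i).1.1 (regime w i).
Definition stage_payoff t x s :=
  dotv (ps t x s (us t x s)) (Vvec A B P q sig g t (V t.+1) x s (us t x s)).
Definition cut_payoff k (w : Defs.path nF N T) :=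
  (\prod_(i < T | (i < k)%N) step_prob w i) *
  (\prod_(i < T | ~~ (i < k)%N) ((w i == idle_step)%:R)) *
  (\sum_(i < T | (i < k)%N) step_cost w i + V k (state w k) (regime w k)).
Definition cut_value k := \sum_(w : Defs.path nF N T) cut_payoff k w.
Definition prefix_weight k (w : Defs.path nF N T) :=
  (\prod_(i < T | (i < k)%N) step_prob w i) *
  (\prod_(i < T | ~~ (i < k.+1)%N) ((w i == idle_step)%:R)).

Lemma regime_S w k (hk : (k < T)%N) : regime w k.+1 = (w (Ordinal hk)).1.2.
Proof. by rewrite /regime /= insubT. Qed.

Lemma state_S w k (hk : (k < T)%N) : state w k.+1 =
  A k *m state w k + (nat_of_bool (w (Ordinal hk)).2)%:R *: (B k *m ctrl w k).
Proof. by rewrite /state /= insubT. Qed.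

Lemma state_agree (w w' : Defs.path nF N T) K :
  (forall j : 'I_T, (j < K)%N -> w j = w' j) ->
  forall i, (i <= K)%N -> state w i = state w' i /\ regime w i = regime w' i.
Proof.
move=> ww'; elim => [|i IH] iK //; have [xi si] := IH (ltnW iK).
case: (ltnP i T) => iT; first by rewrite !state_S !regime_S xi si ww'.
rewrite /state /regime /=; case: insubP => [j _ ji|_]; last by split => //; exact: xi.
by move: iT; rewrite -ji leqNgt ltn_ord.
Qed.

Lemma step_prob_ge0 w i : 0 <= step_prob w i.
Proof.
have [p_ge0 _] := ps_admissible (state w i) (regime w i) (ctrl w i) (ltn_ord i).
have [q0 q1] := andP (q_01 i (w i).1.2).
by rewrite /step_prob !mulr_ge0 //; case: (w i).2; rewrite ?subr_ge0.
Qed.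

Lemma prefix_weight_ge0 k w : 0 <= prefix_weight k w.
Proof.
rewrite /prefix_weight mulr_ge0 //; first by apply: prodr_ge0 => i _; exact: step_prob_ge0.
by apply: prodr_ge0 => i _; rewrite ler0n.
Qed.

Lemma sumr_step (F : 'I_N * 'I_nF * bool -> R) :
  \sum_y F y = \sum_a \sum_j \sum_b F (a, j, b).
Proof. by rewrite pair_bigA pair_bigA /=; apply: eq_bigr => -[[a j] b] _. Qed.

Lemma expected_step (p : 'cV[R]_N) k x s u (Wn : 'cV[R]_n -> 'I_nF -> R) (C : R) :
  simplex N p ->
  \sum_(y : 'I_N * 'I_nF * bool)
    (p y.1.1 0 * P k y.1.1 s y.1.2 * (if y.2 then q k y.1.2 else 1 - q k y.1.2)) *
    (C + (sig k x u - g k y.1.1 s) + Wn (A k *m x + (nat_of_bool y.2)%:R *: (B k *m u)) y.1.2)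
  = C + dotv p (Vvec A B P q sig g k Wn x s u).
Proof.
move=> [p0 p1]; rewrite sumr_step /dotv.
have -> : C + \sum_a p a 0 * (Vvec A B P q sig g k Wn x s u) a 0 =
    \sum_a (p a 0 * C + p a 0 * (Vvec A B P q sig g k Wn x s u) a 0).
  by rewrite big_split /= -mulr_suml p1 mul1r.
apply: eq_bigr => a _; rewrite mxE.
rewrite (eq_bigr (fun j => p a 0 * (C + (sig k x u - g k a s)) * P k a s j +
   p a 0 * (P k a s j * (q k j * Wn (A k *m x + B k *m u) j +
   (1 - q k j) * Wn (A k *m x) j)))); last first.
  move=> j _; rewrite big_bool /= scale1r scale0r addr0; ring.
rewrite big_split /= -mulr_sumr -mulr_sumr P_sum1; ring.
Qed.

Lemma cut_payoff_idle k (hk : (k < T)%N) w :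
  cut_payoff k w = (w (Ordinal hk) == idle_step)%:R *
    (prefix_weight k w *
     (\sum_(i < T | (i < k)%N) step_cost w i + V k (state w k) (regime w k))).
Proof. by rewrite /cut_payoff /prefix_weight (prodr_geqS _ hk); ring. Qed.

Lemma fupd_lt k (hk : (k < T)%N) (w : Defs.path nF N T) y (i : 'I_T) : (i < k)%N ->
  fupd w (Ordinal hk) y i = w i.
Proof. by move=> ik; rewrite ffunE; case: eqP => // ik'; rewrite ik' ltnn in ik. Qed.

Lemma state_fupd k (hk : (k < T)%N) (w : Defs.path nF N T) y i : (i <= k)%N ->
  state (fupd w (Ordinal hk) y) i = state w i /\
  regime (fupd w (Ordinal hk) y) i = regime w i.
Proof. by apply: state_agree => j /(fupd_lt hk w y). Qed.

Lemma cut_payoff_update k (hk : (k < T)%N) w y :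
  cut_payoff k.+1 (fupd w (Ordinal hk) y) = prefix_weight k w *
   ((ps k (state w k) (regime w k) (ctrl w k) y.1.1 0
     * P k y.1.1 (regime w k) y.1.2 * (if y.2 then q k y.1.2 else 1 - q k y.1.2)) *
    ((\sum_(i < T | (i < k)%N) step_cost w i) +
      (sig k (state w k) (ctrl w k) - g k y.1.1 (regime w k)) +
      V k.+1 (A k *m state w k + (nat_of_bool y.2)%:R *: (B k *m ctrl w k)) y.1.2)).
Proof.
set w' := fupd w (Ordinal hk) y.
have w'k : w' (Ordinal hk) = y by rewrite ffunE eqxx.
have [xk sk] := state_fupd hk w y (leqnn k).
have prefix (i : 'I_T) : (i < k)%N ->
    [/\ w' i = w i, state w' i = state w i & regime w' i = regime w i].
  by move=> ik; have [? ?] := state_fupd hk w y (ltnW ik); rewrite fupd_lt.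
rewrite /cut_payoff /prefix_weight (prodr_ltnS _ hk) (sumr_ltnS _ hk).
have -> : \prod_(i < T | (i < k)%N) step_prob w' i = \prod_(i < T | (i < k)%N) step_prob w i.
  by apply: eq_bigr => i /prefix[wi xi si]; rewrite /step_prob wi xi si.
have -> : \sum_(i < T | (i < k)%N) step_cost w' i = \sum_(i < T | (i < k)%N) step_cost w i.
  by apply: eq_bigr => i /prefix[wi xi si]; rewrite /step_cost wi xi si.
have -> : \prod_(i < T | ~~ (i < k.+1)%N) ((w' i == idle_step)%:R : R) =
          \prod_(i < T | ~~ (i < k.+1)%N) ((w i == idle_step)%:R : R).
  apply: eq_bigr => i ik; rewrite ffunE; case: (i =P Ordinal hk) => // ik'.
  by rewrite ik' /= ltnSn in ik.
rewrite (state_S _ hk) (regime_S _ hk) /step_prob /step_cost w'k xk sk /=; ring.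
Qed.

Lemma cut_value_S k (hk : (k < T)%N) : cut_value k.+1 = cut_value k +
  \sum_(w : Defs.path nF N T) ((w (Ordinal hk) == idle_step)%:R * prefix_weight k w) *
     (stage_payoff k (state w k) (regime w k) - V k (state w k) (regime w k)).
Proof.
rewrite /cut_value [in LHS](sumr_ffun_update _ (Ordinal hk) idle_step).
rewrite [X in _ = X + _](eq_bigr _ (fun w _ => cut_payoff_idle hk w)).
rewrite -big_split /=; apply: eq_bigr => w _.
under eq_bigr do rewrite (cut_payoff_update hk).
rewrite -mulr_sumr expected_step; last exact: ps_admissible.
by rewrite /stage_payoff; ring.
Qed.

Lemma cut_value0 : cut_value 0 = V 0 x0 s0.
Proof.
rewrite /cut_value /cut_payoff.
have idle (w : Defs.path nF N T) :
    \prod_(i < T | ~~ (i < 0)%N) ((w i == idle_step)%:R : R) = (w == [ffun=> idle_step])%:R.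
  case: eqP => [->|w_busy]; first by apply: big1 => i _; rewrite ffunE eqxx.
  have [i wi] : exists i, w i != idle_step.
    apply/existsP; apply: contraT; rewrite negb_exists => /forallP w_idle.
    by case: w_busy; apply/ffunP => i; rewrite ffunE; apply/eqP/negPn/w_idle.
  by rewrite (bigD1 i) //= (negbTE wi) /= mulr0n mul0r.
under eq_bigr do rewrite idle big_pred0 ?big_pred0 //.
rewrite (bigD1 [ffun=> idle_step]) //= eqxx big1 ?addr0; last first.
  by move=> w /negbTE ->; rewrite mul1r mulr0n mul0r.
by rewrite /state /= mul1r mulr1n mul1r add0r.
Qed.

Lemma cut_valueT : cut_value T = expected_payoff T A B P q sig sigT g gT x0 s0 us ps.
Proof.
rewrite /cut_value /expected_payoff; apply: eq_bigr => w _.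
rewrite /cut_payoff (eq_bigl xpredT); last by move=> i; rewrite ltn_ord.
rewrite (eq_bigl xpred0 (fun i : 'I_T => ((w i == idle_step)%:R : R))); last first.
  by move=> i; rewrite ltn_ord.
rewrite big_pred0_eq mulr1 (eq_bigl xpredT (step_cost w)); last by move=> i; rewrite ltn_ord.
rewrite V_terminal /path_prob /payoff /step_prob /step_cost /state /regime /uAt.
by rewrite addrA.
Qed.

Lemma expected_payoff_le_value : (forall t x s, (t < T)%N -> stage_payoff t x s <= V t x s) ->
  expected_payoff T A B P q sig sigT g gT x0 s0 us ps <= V 0 x0 s0.
Proof.
move=> stage_le; rewrite -cut_valueT -cut_value0.
suff : forall k, (k <= T)%N -> cut_value k <= cut_value 0 by apply; exact: leqnn.
elim => [//|k IH] hk; rewrite (cut_value_S hk).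
apply: le_trans (IH (ltnW hk)); rewrite gerDl.
apply: sumr_le0 => w _; apply: mulr_ge0_le0.
  by rewrite mulr_ge0 ?ler0n ?prefix_weight_ge0.
by rewrite subr_le0; apply: stage_le.
Qed.

Lemma value_le_expected_payoff : (forall t x s, (t < T)%N -> V t x s <= stage_payoff t x s) ->
  V 0 x0 s0 <= expected_payoff T A B P q sig sigT g gT x0 s0 us ps.
Proof.
move=> stage_ge; rewrite -cut_valueT -cut_value0.
suff : forall k, (k <= T)%N -> cut_value 0 <= cut_value k by apply; exact: leqnn.
elim => [//|k IH] hk; rewrite (cut_value_S hk).
apply: le_trans (IH (ltnW hk)) _; rewrite lerDl.
apply: sumr_ge0 => w _; apply: mulr_ge0.
  by rewrite mulr_ge0 ?ler0n ?prefix_weight_ge0.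
by rewrite subr_ge0; apply: stage_ge.
Qed.

End Game.

Section ValueFunctions.
Variables (R : realType) (n m nF N T : nat)
  (A : nat -> 'M[R]_n) (B : nat -> 'M[R]_(n, m))
  (P : nat -> 'I_N -> 'I_nF -> 'I_nF -> R) (q : nat -> 'I_nF -> R)
  (sig : nat -> 'cV[R]_n -> 'cV[R]_m -> R) (sigT : 'cV[R]_n -> R)
  (g : nat -> 'I_N -> 'I_nF -> R) (gT : 'I_nF -> R).
Hypothesis N_gt0 : (0 < N)%N.
Hypothesis P_ge0 : forall t a j i, 0 <= P t a j i.
Hypothesis P_sum1 : forall t a j, \sum_i P t a j i = 1.
Hypothesis q_01 : forall t i, 0 <= q t i <= 1.
Hypothesis sigT_ge0 : forall x, 0 <= sigT x.
Hypothesis sig_lb : forall t, (t < T)%N -> exists (e d : R) (al be : R -> R),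
  tends_to_infty al /\ tends_to_infty be /\
  (forall y, 0 <= y -> e <= al y) /\ (forall y, 0 <= y -> d <= be y) /\
  (forall x u, al (enorm u) + be (enorm x) <= sig t x u).
Hypothesis sig_convex : forall t, (t < T)%N -> jointly_convex (sig t).
Hypothesis sigT_convex : convex_fun sigT.
Hypothesis sigT_continuous : continuous sigT.
Hypothesis sig_unif_cont_x : forall t, (t < T)%N -> unif_cont_in_x (sig t).
Hypothesis sig_cont_u : forall t x, (t < T)%N -> continuous (sig t x).

Local Notation Vrev := (Vrev T A B P q sig sigT g gT).
Local Notation V := (Vval T A B P q sig sigT g gT).

Lemma Vrev_regular k : (k <= T)%N ->
  [/\ forall s, convex_fun (Vrev k ^~ s), forall s, continuous (Vrev k ^~ s) &
      exists L, forall x s, L <= Vrev k x s].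
Proof.
elim: k => [_|k IH kT].
  split => [s x y l l01|s x|]; rewrite /=.
  - by have := @sigT_convex x y l l01; lra.
  - by apply: continuousB; [exact: sigT_continuous | exact: cst_continuous].
  exists (- \sum_s `|gT s|) => x s /=.
  by have := sigT_ge0 x; have := ler_sum_norm gT s; lra.
have [W_convex W_continuous [L W_ge]] := IH (ltnW kT).
have tT : (T - k.+1 < T)%N by rewrite ltn_subrL (leq_ltn_trans (leq0n k) kT).
have [e [d [al [be [al_infty [_ [al_ge [be_ge sig_ge]]]]]]]] := sig_lb tT.
have cont_u x := @sig_cont_u _ x tT.
split => [s|s|].
- exact: (convex_next_value A B g N_gt0 P_ge0 P_sum1 q_01 al_infty sig_ge
    (sig_convex tT) cont_u W_convex W_continuous W_ge).
- exact: (continuous_next_value N_gt0 P_ge0 P_sum1 q_01 al_infty sig_ge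
    (sig_convex tT) (sig_unif_cont_x tT) cont_u W_convex W_continuous W_ge).
- exists (e + d - \sum_a \sum_j `|g (T - k.+1)%N a j| + L) => x s.
  exact: (next_value_lb A B g N_gt0 P_ge0 P_sum1 q_01 al_infty al_ge be_ge sig_ge
    (sig_convex tT) cont_u W_convex W_continuous W_ge).
Qed.

Lemma Vval_S t : (t < T)%N -> V t = next_value A B P q sig g t (V t.+1).
Proof. by move=> tT; rewrite /Vval -(subnSK tT) /= (subnSK tT) (subKn (ltnW tT)). Qed.

Lemma stage_saddle_V t x s : (t < T)%N ->
  [/\ infsup A B P q sig g t (V t.+1) x s = supinf A B P q sig g t (V t.+1) x s,
      infsup A B P q sig g t (V t.+1) x s = (V t x s)%:E,
      exists u0, ereal_sup [set (dotv p (Vvec A B P q sig g t (V t.+1) x s u0))%:E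
                           | p in simplex N] = infsup A B P q sig g t (V t.+1) x s &
      exists2 p, simplex N p &
        ereal_inf [set (dotv p (Vvec A B P q sig g t (V t.+1) x s u))%:E
                  | u in [set: 'cV_m]] = supinf A B P q sig g t (V t.+1) x s].
Proof.
move=> tT; rewrite (Vval_S tT).
have [W_convex W_continuous [L W_ge]] := Vrev_regular (leq_subr t.+1 T).
have [e [d [al [be [al_infty [_ [_ [_ sig_ge]]]]]]]] := sig_lb tT.
exact: (stage_saddle A B g N_gt0 P_ge0 P_sum1 q_01 al_infty sig_ge (sig_convex tT)
  (fun x => @sig_cont_u _ x tT) W_convex W_continuous W_ge).
Qed.

Lemma value_function_properties t : (t < T)%N ->
  (forall x s,
     infsup A B P q sig g t (V t.+1) x s = supinf A B P q sig g t (V t.+1) x s /\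
     infsup A B P q sig g t (V t.+1) x s = (V t x s)%:E) /\
  (forall s, convex_fun (V t ^~ s) /\ continuous (V t ^~ s)).
Proof.
move=> tT; split => [x s|s]; first by have [] := stage_saddle_V x s tT.
have [V_convex V_continuous _] := Vrev_regular (leq_subr t T).
by split; [exact: V_convex | exact: V_continuous].
Qed.

Definition optimal_control (us : ctrl_strat n m nF) := forall t x s, (t < T)%N ->
  ereal_sup [set (dotv p (Vvec A B P q sig g t (V t.+1) x s (us t x s)))%:E
            | p in simplex N] = infsup A B P q sig g t (V t.+1) x s.

Definition optimal_jamming (ps : jam_strat n m nF N) := forall t x s u, (t < T)%N ->
  simplex N (ps t x s u) /\
  ereal_inf [set (dotv (ps t x s u) (Vvec A B P q sig g t (V t.+1) x s u'))%:E
            | u' in [set: 'cV[R]_m]] = supinf A B P q sig g t (V t.+1) x s.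

Lemma optimal_strategies_exist : exists us ps, optimal_control us /\ optimal_jamming ps.
Proof.
have u_opt (txs : nat * 'cV[R]_n * 'I_nF) : exists u, let: (t, x, s) := txs in
    (t < T)%N -> ereal_sup [set (dotv p (Vvec A B P q sig g t (V t.+1) x s u))%:E
                           | p in simplex N] = infsup A B P q sig g t (V t.+1) x s.
  case: txs => [[t x] s]; case: (ltnP t T) => [tT|_]; last by exists 0.
  by have [_ _ [u0 u0_opt] _] := stage_saddle_V x s tT; exists u0.
have p_opt (txs : nat * 'cV[R]_n * 'I_nF) : exists p, let: (t, x, s) := txs in
    (t < T)%N -> simplex N p /\
    ereal_inf [set (dotv p (Vvec A B P q sig g t (V t.+1) x s u))%:E
              | u in [set: 'cV[R]_m]] = supinf A B P q sig g t (V t.+1) x s.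
  case: txs => [[t x] s]; case: (ltnP t T) => [tT|_]; last by exists 0.
  by have [_ _ _ [p p_simplex p0_opt]] := stage_saddle_V x s tT; exists p.
have [us us_opt] := choice u_opt; have [ps ps_opt] := choice p_opt.
exists (fun t x s => us (t, x, s)), (fun t x s _ => ps (t, x, s)).
by split => [t x s|t x s _]; [exact: us_opt (t, x, s) | exact: ps_opt (t, x, s)].
Qed.

Lemma saddle_point_of_optimal x0 s0 us ps :
  optimal_control us -> optimal_jamming ps ->
  saddle_point T A B P q sig sigT g gT x0 s0 us ps.
Proof.
move=> us_opt ps_opt.
have ps_adm : admissible_jam T ps by move=> t x s u tT; have [] := ps_opt t x s u tT.
have V_terminal x s : V T x s = sigT x - gT s by rewrite /Vval subnn.
have us_best ps' : admissible_jam T ps' ->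
    expected_payoff T A B P q sig sigT g gT x0 s0 us ps' <= V 0 x0 s0.
  move=> ps'_adm; apply: (expected_payoff_le_value x0 s0 (action0 N_gt0) P_ge0 P_sum1 q_01
    ps'_adm V_terminal) => t x s tT.
  have [_ VE _ _] := stage_saddle_V x s tT.
  rewrite -lee_fin -VE -(us_opt t x s tT); apply: ereal_sup_ubound.
  by exists (ps' t x s (us t x s)) => //; exact: ps'_adm.
have ps_best us' : V 0 x0 s0 <= expected_payoff T A B P q sig sigT g gT x0 s0 us' ps.
  apply: (value_le_expected_payoff x0 s0 (action0 N_gt0) P_ge0 P_sum1 q_01
    ps_adm V_terminal) => t x s tT.
  have [minimax_eq VE _ _] := stage_saddle_V x s tT.
  rewrite -lee_fin -VE minimax_eq -(ps_opt t x s (us' t x s) tT).2.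
  by apply: ereal_inf_lbound; exists (us' t x s).
have value_eq : expected_payoff T A B P q sig sigT g gT x0 s0 us ps = V 0 x0 s0.
  by apply/le_anti; rewrite us_best // ps_best.
split => //; apply: saddle_point_value ps_adm _ _ => [p p_adm|u].
  by rewrite value_eq; exact: us_best.
by rewrite value_eq; exact: ps_best.
Qed.

End ValueFunctions.

Unset Implicit Arguments.

Theorem theorem4 (R : realType) (n m nF N T : nat)
  (A : nat -> 'M[R]_n) (B : nat -> 'M[R]_(n, m))
  (P : nat -> 'I_N -> 'I_nF -> 'I_nF -> R) (q : nat -> 'I_nF -> R)
  (sig : nat -> 'cV[R]_n -> 'cV[R]_m -> R) (sigT : 'cV[R]_n -> R)
  (g : nat -> 'I_N -> 'I_nF -> R) (gT : 'I_nF -> R)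
  (x0 : 'cV[R]_n) (s0 : 'I_nF) :
  (* standing assumptions of the model *)
  (0 < N)%N ->
  (forall t a j i, 0 <= P t a j i) ->
  (forall t a j, \sum_i P t a j i = 1) ->
  (forall t i, 0 <= q t i <= 1) ->
  (forall t x u, 0 <= sig t x u) ->
  (forall x, 0 <= sigT x) ->
  (* (i) *)
  (forall t, (t < T)%N -> exists (e d : R) (al be : R -> R),
     tends_to_infty al /\ tends_to_infty be /\
     (forall y, 0 <= y -> e <= al y) /\ (forall y, 0 <= y -> d <= be y) /\
     (forall x u, al (enorm u) + be (enorm x) <= sig t x u)) ->
  (* (ii) *)
  (forall t, (t < T)%N -> jointly_convex (sig t)) ->
  (* (iii) *)
  convex_fun sigT ->
  (exists (dT : R) (beT : R -> R),
     tends_to_infty beT /\ (forall y, 0 <= y -> 0 <= beT y) /\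
     (forall y, 0 <= y -> dT <= beT y) /\
     (forall x, beT (enorm x) <= sigT x)) ->
  (* (iv) *)
  continuous sigT ->
  (forall t, (t < T)%N -> unif_cont_in_x (sig t)) ->
  (forall t x, (t < T)%N -> continuous (sig t x)) ->
  (* conclusions *)
  (forall t, (t < T)%N ->
     (forall x s,
        infsup A B P q sig g t (Vval T A B P q sig sigT g gT t.+1) x s
        = supinf A B P q sig g t (Vval T A B P q sig sigT g gT t.+1) x s /\
        infsup A B P q sig g t (Vval T A B P q sig sigT g gT t.+1) x s
        = (Vval T A B P q sig sigT g gT t x s)%:E) /\
     (forall s, convex_fun (fun x => Vval T A B P q sig sigT g gT t x s) /\
                continuous (fun x => Vval T A B P q sig sigT g gT t x s))) /\
  (exists (us : ctrl_strat n m nF) (ps : jam_strat n m nF N),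
     (forall t x s, (t < T)%N ->
        ereal_sup [set (dotv p (Vvec A B P q sig g t
                          (Vval T A B P q sig sigT g gT t.+1) x s (us t x s)))%:E
                  | p in simplex N]
        = infsup A B P q sig g t (Vval T A B P q sig sigT g gT t.+1) x s) /\
     (forall t x s u, (t < T)%N ->
        simplex N (ps t x s u) /\
        ereal_inf [set (dotv (ps t x s u) (Vvec A B P q sig g t
                          (Vval T A B P q sig sigT g gT t.+1) x s u'))%:E
                  | u' in [set: 'cV[R]_m]]
        = supinf A B P q sig g t (Vval T A B P q sig sigT g gT t.+1) x s)) /\
  (forall (us : ctrl_strat n m nF) (ps : jam_strat n m nF N),
     (forall t x s, (t < T)%N ->
        ereal_sup [set (dotv p (Vvec A B P q sig g t
                          (Vval T A B P q sig sigT g gT t.+1) x s (us t x s)))%:E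
                  | p in simplex N]
        = infsup A B P q sig g t (Vval T A B P q sig sigT g gT t.+1) x s) ->
     (forall t x s u, (t < T)%N ->
        simplex N (ps t x s u) /\
        ereal_inf [set (dotv (ps t x s u) (Vvec A B P q sig g t
                          (Vval T A B P q sig sigT g gT t.+1) x s u'))%:E
                  | u' in [set: 'cV[R]_m]]
        = supinf A B P q sig g t (Vval T A B P q sig sigT g gT t.+1) x s) ->
     saddle_point T A B P q sig sigT g gT x0 s0 us ps).
Proof.
move=> N_gt0 P_ge0 P_sum1 q_01 _ sigT_ge0 sig_lb sig_convex sigT_convex _ sigT_continuous
  sig_unif_cont_x sig_cont_u.
split; first by apply: value_function_properties.
split; first by apply: optimal_strategies_exist.
by move=> us ps; apply: saddle_point_of_optimal.
Qed.
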